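(* For every reachable pointed lasso automaton $X=(X_1,X_2,\overline{x},\delta_1,\delta_2,\delta_3)$, the pair $(\ker\delta_1^\sharp,\ker\delta^\sharp)$ is a bisimulation congruence on $(\Sigma^\ast,\Sigma^{\ast+})$; and if there is a morphism $h:X\to Y$ between reachable pointed lasso automata, then $\ker\delta_{X,1}^\sharp\subseteq\ker\delta_{Y,1}^\sharp$ and $\ker\delta_X^\sharp\subseteq\ker\delta_Y^\sharp$. (That is, $T(X)=(\ker\delta_1^\sharp,\ker\delta^\sharp)$ defines a functor $T$ from reachable pointed lasso automata to bisimulation congruences ordered by inclusion.)
   Context: $\Sigma$ is a finite alphabet, $\Sigma^+$ nonempty words, $\Sigma^{\ast+}=\Sigma^\ast\times\Sigma^+$ the lassos. A pointed lasso automaton is $(X_1,X_2,\overline{x},\delta_1,\delta_2,\delta_3)$ with disjoint $X_1,X_2$, $\overline{x}\in X_1$, $\delta_1:X_1\times\Sigma\to X_1$, $\delta_2:X_1\times\Sigma\to X_2$, $\delta_3:X_2\times\Sigma\to X_2$. Extend $\delta_1,\delta_3$ to words, set $\delta_\circ(x,av)=\delta_3(\delta_2(x,a),v)$ for $x\in X_1$, and $\delta(x,(u,v))=\delta_\circ(\delta_1(x,u),v)$. It is reachable if every $x\in X_1$ is $\delta_1(\overline{x},w)$ for some $w\in\Sigma^\ast$ and every $y\in X_2$ is $\delta(\overline{x},(u,v))$ for some lasso. A morphism is a pair of maps $h_1:X_1\to Y_1$, $h_2:X_2\to Y_2$ preserving initial states and commuting with $\delta_1,\delta_2,\delta_3$.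 $\ker\delta_1^\sharp=\{(u,v)\in\Sigma^\ast\times\Sigma^\ast\mid\forall x\in X_1:\delta_1(x,u)=\delta_1(x,v)\}$, $\ker\delta^\sharp=\{((u,v),(u',v'))\in\Sigma^{\ast+}\times\Sigma^{\ast+}\mid\forall x\in X_1:\delta(x,(u,v))=\delta(x,(u',v'))\}$. A bisimulation congruence is a pair $(C_1,C_2)$ of equivalence relations on $\Sigma^\ast$ and $\Sigma^{\ast+}$ such that: $C_1$ is a monoid congruence on $\Sigma^\ast$; $(w,w')\in C_1$ and $((u,v),(u',v'))\in C_2$ imply $((wu,v),(w'u',v'))\in C_2$; $(u,u')\in C_1$ implies $(ua,u'a)\in C_1$ and $((u,a),(u',a))\in C_2$ for $a\in\Sigma$; $((u,v),(u',v'))\in C_2$ implies $((u,va),(u',v'a))\in C_2$. *)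

From mathcomp Require Import all_boot.
Set Implicit Arguments. Unset Strict Implicit. Unset Printing Implicit Defensive.

(* Alphabet: a finite type S. Words Sigma^* : seq S.
   Nonempty words Sigma^+ : the subtype of nonempty sequences.
   Lassos Sigma^{*+} : seq S * neword S. *)

Section Words.
Variable S : finType.

Definition neword := {w : seq S | w != [::]}.
Definition lasso := (seq S * neword)%type.

Lemma rcons_neq_nil (v : seq S) (a : S) : rcons v a != [::].
Proof. by case: v. Qed.

Definition ne_single (a : S) : neword := exist _ [:: a] isT.
Definition ne_rcons (v : neword) (a : S) : neword :=
  exist _ (rcons (sval v) a) (rcons_neq_nil (sval v) a).
End Words.

(* Pointed lasso automaton; X1 and X2 are separate types (hence disjoint). *)
Record PLA (S : finType) := {
  X1 : Type;
  X2 : Type;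
  xbar : X1;
  delta1 : X1 -> S -> X1;
  delta2 : X1 -> S -> X2;
  delta3 : X2 -> S -> X2 }.

Section Automaton.
Variables (S : finType) (X : PLA S).

Definition delta1s (x : X1 X) (u : seq S) : X1 X := foldl (@delta1 S X) x u.
Definition delta3s (y : X2 X) (u : seq S) : X2 X := foldl (@delta3 S X) y u.

Definition delta_o (x : X1 X) (w : neword S) : X2 X :=
  match sval w as s return s != [::] -> X2 X with
  | [::] => fun H => False_rect _ (eq_ind false (fun b : bool => if b then False else True) I true H)
  | a :: v => fun _ => delta3s (delta2 x a) v
  end (svalP w).

Definition delta (x : X1 X) (l : lasso S) : X2 X := delta_o (delta1s x l.1) l.2.

Definition reachable : Prop :=
  (forall x : X1 X, exists w : seq S, delta1s (xbar X) w = x) /\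
  (forall y : X2 X, exists l : lasso S, delta (xbar X) l = y).

Definition ker_delta1 (u v : seq S) : Prop :=
  forall x : X1 X, delta1s x u = delta1s x v.

Definition ker_delta (l l' : lasso S) : Prop :=
  forall x : X1 X, delta x l = delta x l'.
End Automaton.

Record PLA_morphism (S : finType) (X Y : PLA S) := {
  h1 : X1 X -> X1 Y;
  h2 : X2 X -> X2 Y;
  h_init : h1 (xbar X) = xbar Y;
  h_delta1 : forall x a, h1 (delta1 x a) = delta1 (h1 x) a;
  h_delta2 : forall x a, h2 (delta2 x a) = delta2 (h1 x) a;
  h_delta3 : forall y a, h2 (delta3 y a) = delta3 (h2 y) a }.

Definition equivalence_rel (T : Type) (R : T -> T -> Prop) : Prop :=
  (forall x, R x x) /\ (forall x y, R x y -> R y x) /\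
  (forall x y z, R x y -> R y z -> R x z).

Definition bisim_congruence (S : finType)
  (C1 : seq S -> seq S -> Prop) (C2 : lasso S -> lasso S -> Prop) : Prop :=
  equivalence_rel C1 /\ equivalence_rel C2 /\
      (forall u u' v v', C1 u u' -> C1 v v' -> C1 (u ++ v) (u' ++ v')) /\
      (forall w w' u v u' v', C1 w w' -> C2 (u, v) (u', v') ->
          C2 (w ++ u, v) (w' ++ u', v')) /\
      (forall u u' (a : S), C1 u u' ->
          C1 (rcons u a) (rcons u' a) /\ C2 (u, ne_single a) (u', ne_single a)) /\
      (forall u v u' v' (a : S), C2 (u, v) (u', v') ->
          C2 (u, ne_rcons v a) (u', ne_rcons v' a)).

(* Both kernels are kernels of the action of words on states, and the extended
   transition maps compose along concatenation, so they are equivalences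
   compatible with the lasso operations.
   A morphism commutes with the extended transition maps, and reachability of
   the target makes [h1] surjective, so an equation that holds at every state
   of X is transported to every state of Y. *)
From Pilot Require Import Defs.
From mathcomp Require Import all_boot.

Set Implicit Arguments.
Unset Strict Implicit.
Unset Printing Implicit Defensive.

(* Qualified: ssrbool's [equivalence_rel] shadows the one of Defs. *)
Lemma equivalence_pointwise_eq (I A B : Type) (f : I -> A -> B) :
  Defs.equivalence_rel (fun a b : A => forall i, f i a = f i b).
Proof.
split; first by [].
split; first by move=> a b eq_ab i; rewrite eq_ab.
by move=> a b c eq_ab eq_bc i; rewrite eq_ab eq_bc.
Qed.

Section Transitions.
Variables (S : finType) (X : PLA S).

Lemma delta1s_cat (x : X1 X) (u v : seq S) :
  delta1s x (u ++ v) = delta1s (delta1s x u) v.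
Proof. exact: foldl_cat. Qed.

Lemma delta1s_rcons (x : X1 X) (u : seq S) (a : S) :
  delta1s x (rcons u a) = delta1 (delta1s x u) a.
Proof. exact: foldl_rcons. Qed.

Lemma delta_o_rcons (x : X1 X) (v : neword S) (a : S) :
  delta_o x (ne_rcons v a) = delta3 (delta_o x v) a.
Proof. by case: v => [[|b v] neq_nil] //; rewrite /delta_o /= /delta3s foldl_rcons. Qed.

Lemma delta_cat (x : X1 X) (w u : seq S) (v : neword S) :
  delta x (w ++ u, v) = delta (delta1s x w) (u, v).
Proof. by rewrite /delta /= delta1s_cat. Qed.

Lemma delta_single (x : X1 X) (u : seq S) (a : S) :
  delta x (u, ne_single a) = delta2 (delta1s x u) a.
Proof. by []. Qed.

Lemma delta_ne_rcons (x : X1 X) (u : seq S) (v : neword S) (a : S) :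
  delta x (u, ne_rcons v a) = delta3 (delta x (u, v)) a.
Proof. exact: delta_o_rcons. Qed.

Lemma ker_delta_bisim_congruence :
  bisim_congruence (ker_delta1 X) (ker_delta X).
Proof.
split; first exact (equivalence_pointwise_eq (@delta1s S X)).
split; first exact (equivalence_pointwise_eq (@delta S X)).
split; first by move=> u u' v v' eq_u eq_v x; rewrite !delta1s_cat eq_u eq_v.
split; first by move=> w w' u v u' v' eq_w eq_uv x; rewrite !delta_cat eq_w eq_uv.
split.
  move=> u u' a eq_u; split=> x; first by rewrite !delta1s_rcons eq_u.
  by rewrite !delta_single eq_u.
by move=> u v u' v' a eq_uv x; rewrite !delta_ne_rcons eq_uv.
Qed.

End Transitions.

Section Morphisms.
Variables (S : finType) (X Y : PLA S) (h : PLA_morphism X Y).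

Lemma delta1s_morph (x : X1 X) (u : seq S) :
  delta1s (h1 h x) u = h1 h (delta1s x u).
Proof. by elim: u x => [|a u IHu] x //=; rewrite /delta1s /= -h_delta1; apply: IHu. Qed.

Lemma delta3s_morph (y : X2 X) (v : seq S) :
  delta3s (h2 h y) v = h2 h (delta3s y v).
Proof. by elim: v y => [|a v IHv] y //=; rewrite /delta3s /= -h_delta3; apply: IHv. Qed.

Lemma delta_morph (x : X1 X) (l : lasso S) :
  delta (h1 h x) l = h2 h (delta x l).
Proof.
case: l => u [[|a v] neq_nil] //.
by rewrite /delta /delta_o /= delta1s_morph -h_delta2 delta3s_morph.
Qed.

Lemma h1_surjective_of_reachable :
  reachable Y -> forall y : X1 Y, exists x : X1 X, h1 h x = y.
Proof.
case=> reach_Y _ y; have [w <-] := reach_Y y.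
by exists (delta1s (xbar X) w); rewrite -delta1s_morph h_init.
Qed.

Hypothesis h1_surj : forall y : X1 Y, exists x : X1 X, h1 h x = y.

Lemma ker_delta1_morph (u v : seq S) : ker_delta1 X u v -> ker_delta1 Y u v.
Proof. by move=> eq_uv y; have [x <-] := h1_surj y; rewrite !delta1s_morph eq_uv. Qed.

Lemma ker_delta_morph (l l' : lasso S) : ker_delta X l l' -> ker_delta Y l l'.
Proof. by move=> eq_ll' y; have [x <-] := h1_surj y; rewrite !delta_morph eq_ll'. Qed.

End Morphisms.

Theorem mainTheorem10 (S : finType) :
  (forall X : PLA S, reachable X ->
     bisim_congruence (ker_delta1 X) (ker_delta X)) /\
  (forall (X Y : PLA S), reachable X -> reachable Y ->
     PLA_morphism X Y ->
     (forall u v, ker_delta1 X u v -> ker_delta1 Y u v) /\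
     (forall l l', ker_delta X l l' -> ker_delta Y l l')).
Proof.
split=> [X _ | X Y _ reach_Y h]; first exact: ker_delta_bisim_congruence.
have h1_surj := h1_surjective_of_reachable h reach_Y.
by split; [exact: ker_delta1_morph h1_surj | exact: ker_delta_morph h1_surj].
Qed.
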